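(* For every non-negative integer vector ${\bf v}=(v_1,\dots,v_{n+1})$ we have $f_{\bf v}(t)\le F_{\bf v}(t)$ for all $t\ge0$, with equality for all $t\ge 0$ if ${\bf v}$ is GMS.
   Context: Binomial convention: $\binom{a}{k}=0$ if $a<k$. $f_{\bf v}(t)=\sum_{i=0}^{n}\binom{\min(t-i+1,v_{i+1})}{1}$, $F_{\bf v}(t)=\min_{0\le i\le n+1}\big(\binom{t+2}{2}-\binom{t-i+2}{2}+\sum_{j=i+1}^{n+1}v_j\big)$. A non-negative, non-increasing integer vector ${\bf v}$ is GMS if $v_i-v_j\ge j-i-1$ for all $i<j$. *)

From mathcomp Require Import all_boot.
Set Implicit Arguments. Unset Strict Implicit. Unset Printing Implicit Defensive.

(* A vector v = (v_1,...,v_{n+1}) of non-negative integers is encoded as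
   v : 'I_n.+1 -> nat with  v_{k+1} = v k  (0-based indexing).
   Since t >= 0 and all quantities are naturals, truncated subtraction
   realises the convention binom(a,k)=0 for a<k: a negative top argument
   a becomes 0, and 'C(0,1) = 'C(0,2) = 0. *)

Definition fv (n : nat) (v : 'I_n.+1 -> nat) (t : nat) : nat :=
  \sum_(i < n.+1) 'C(minn (t.+1 - i) (v i), 1).

Definition Fterm (n : nat) (v : 'I_n.+1 -> nat) (t i : nat) : nat :=
  'C(t.+2, 2) - 'C(t.+2 - i, 2) + \sum_(k < n.+1 | i <= k) v k.

Definition Fv (n : nat) (v : 'I_n.+1 -> nat) (t : nat) : nat :=
  foldr minn (Fterm v t 0) [seq Fterm v t i | i <- iota 0 n.+2].

Definition GMS (n : nat) (v : 'I_n.+1 -> nat) : Prop :=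
  (forall i j : 'I_n.+1, i <= j -> v j <= v i) /\
  (forall i j : 'I_n.+1, i < j -> v j + (j - i - 1) <= v i).

(* Every term of [fv] is [minn (t.+1 - k) (v k)], so for any cut [i] the sum is
   bounded by the first argument below [i] and the second from [i] on; the first
   part telescopes to ['C(t.+2, 2) - 'C(t.+2 - i, 2)], giving [Fterm v t i].  For a
   GMS vector the gap condition makes [v k <= t.+1 - k] hold from the first index
   where [v k < t.+1 - k] onwards, so at that cut every bound is attained. *)
From mathcomp Require Import all_boot zify.

Lemma bin2_pred m : 'C(m, 2) = m.-1 + 'C(m.-1, 2).
Proof. by case: m => [|m] //=; rewrite binS bin1 addnC. Qed.

Lemma sum_sub_triangle t i :
  \sum_(k < i) (t.+1 - k) = 'C(t.+2, 2) - 'C(t.+2 - i, 2).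
Proof.
suff: \sum_(k < i) (t.+1 - k) + 'C(t.+2 - i, 2) = 'C(t.+2, 2) by move <-; rewrite addnK.
elim: i => [|i IHi]; first by rewrite big_ord0.
rewrite big_ord_recr /= -addnA -IHi subnS; congr (_ + _).
by rewrite [in RHS]bin2_pred -subnS subSS.
Qed.

Lemma big_cut {n : nat} (i : nat) (F : 'I_n.+1 -> nat) :
  \sum_(k < n.+1) F k = \sum_(k < n.+1 | k < i) F k + \sum_(k < n.+1 | i <= k) F k.
Proof.
rewrite (bigID (fun k : 'I_n.+1 => k < i)) /=; congr (_ + _).
by apply: eq_bigl => k; rewrite -leqNgt.
Qed.

Section Cut.

Context {n : nat} {v : 'I_n.+1 -> nat} {t i : nat}.
Hypothesis le_i_n : i <= n.+1.

Lemma Fterm_cut :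
  Fterm v t i = \sum_(k < n.+1 | k < i) (t.+1 - k) + \sum_(k < n.+1 | i <= k) v k.
Proof. by rewrite /Fterm -sum_sub_triangle (big_ord_widen _ (fun k => t.+1 - k) le_i_n). Qed.

Lemma fv_le_Fterm : fv v t <= Fterm v t i.
Proof.
rewrite /fv (big_cut i) Fterm_cut.
by apply: leq_add; apply: leq_sum => k _; rewrite bin1 ?geq_minl ?geq_minr.
Qed.

Lemma fv_eq_Fterm :
  (forall k : 'I_n.+1, k < i -> t.+1 - k <= v k) ->
  (forall k : 'I_n.+1, i <= k -> v k <= t.+1 - k) ->
  fv v t = Fterm v t i.
Proof.
move=> below above; rewrite /fv (big_cut i) Fterm_cut.
congr (_ + _); apply: eq_bigr => k; rewrite bin1.
- by move/below/minn_idPl.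
- by move/above/minn_idPr.
Qed.

End Cut.

Lemma leq_foldr_minn (s : seq nat) x0 y :
  y <= x0 -> {in s, forall x, y <= x} -> y <= foldr minn x0 s.
Proof.
elim: s => [|a s IHs] //= le_y_x0 le_y_s.
rewrite leq_min le_y_s ?mem_head // IHs // => x s_x.
by rewrite le_y_s // in_cons s_x orbT.
Qed.

Lemma foldr_minn_leq (s : seq nat) x0 x : x \in s -> foldr minn x0 s <= x.
Proof.
elim: s => [|a s IHs] //=; rewrite in_cons => /predU1P [->|s_x].
- exact: geq_minl.
- exact: leq_trans (geq_minr _ _) (IHs s_x).
Qed.

Lemma Fv_le_Fterm n (v : 'I_n.+1 -> nat) t i : i <= n.+1 -> Fv v t <= Fterm v t i.
Proof. by move=> le_i_n; apply/foldr_minn_leq/map_f; rewrite mem_iota. Qed.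

Lemma fv_le_Fv n (v : 'I_n.+1 -> nat) t : fv v t <= Fv v t.
Proof.
apply: leq_foldr_minn; first exact: fv_le_Fterm.
by move=> x /mapP [i]; rewrite mem_iota => /andP [_ le_i_n] ->; exact: fv_le_Fterm.
Qed.

(* The cut is the first [k] with [v k < t.+1 - k]; past it, the gap condition
   forces [v j <= v k - (j - k - 1) <= t.+1 - j]. *)
Lemma gap_cut {n : nat} {v : 'I_n.+1 -> nat} (t : nat) :
  (forall i j : 'I_n.+1, i < j -> v j + (j - i - 1) <= v i) ->
  exists i, [/\ i <= n.+1,
    forall k : 'I_n.+1, k < i -> t.+1 - k <= v k &
    forall k : 'I_n.+1, i <= k -> v k <= t.+1 - k].
Proof.
move=> gap; pose small k := v (inord k) < t.+1 - k.
set i := find small (iota 0 n.+1).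
have le_i_n : i <= n.+1 by rewrite -(size_iota 0 n.+1) find_size.
exists i; split => // k.
  move=> lt_k_i; have := before_find 0 lt_k_i.
  rewrite nth_iota ?(leq_trans lt_k_i) // add0n /small inord_val => /negbT.
  by rewrite -leqNgt.
move=> le_i_k; have lt_i_n : i < n.+1 := leq_trans le_i_k (ltn_ord k).
have : small (nth 0 (iota 0 n.+1) i) by apply: nth_find; rewrite has_find size_iota.
rewrite nth_iota // add0n /small => small_i.
move: le_i_k; rewrite leq_eqVlt => /predU1P [eq_ik | lt_ik].
- by move: small_i; rewrite eq_ik inord_val => /ltnW.
- by have := gap (inord i) k; rewrite inordK // => /(_ lt_ik); lia.
Qed.

Theorem mainTheorem12 (n : nat) (v : 'I_n.+1 -> nat) :
  (forall t : nat, fv v t <= Fv v t) /\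
  (GMS v -> forall t : nat, fv v t = Fv v t).
Proof.
split=> [|[_ gap] t]; first exact: fv_le_Fv.
have [i [le_i_n below above]] := gap_cut t gap.
apply/eqP; rewrite eqn_leq fv_le_Fv (fv_eq_Fterm le_i_n below above).
exact: Fv_le_Fterm.
Qed.
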